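(* Let $A$ be an $\mathbb{R}$-algebra and $B$ an $A$-algebra. If $B$ has the substitution property over $A$ along algebraic formal arcs or along algebraic Puiseux arcs, then $B$ has the weak substitution property on points over $A$.
   Context: $\mathbb{R}[[t]]_{\mathrm{alg}}$ is the ring of formal power series in $t$ algebraic over $\mathbb{R}[t]$; $\mathbb{R}[[t^*]]_{\mathrm{alg}}$ is the ring of Puiseux series $\sum_{i\ge0}a_it^{i/m}$ of non-negative order algebraic over $\mathbb{R}[t]$. $B$ has the substitution property along algebraic formal (resp. Puiseux) arcs if every morphism $A\to\mathbb{R}[[t]]_{\mathrm{alg}}$ (resp. $A\to\mathbb{R}[[t^*]]_{\mathrm{alg}}$) admits one and only one lifting to $B$ (a morphism from $B$ whose composition with the structure map $A\to B$ is the given one). $B$ has the weak substitution property over $A$ if every morphism $A\to\mathbb{R}$ admits one and only one lifting to $B$. *)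

From HB Require Import structures.
From mathcomp Require Import all_boot all_order all_algebra.
From mathcomp Require Export reals.
Set Implicit Arguments. Unset Strict Implicit. Unset Printing Implicit Defensive.
Import Order.TTheory GRing.Theory Num.Theory.
Local Open Scope ring_scope.

Section Defs.
Variable R : realType.

Definition ralg_hom (A B : algType R) (f : A -> B) : Prop :=
  [/\ f 1 = 1, forall a b, f (a + b) = f a + f b,
      forall a b, f (a * b) = f a * f b & forall (c : R) a, f (c *: a) = c *: f a].

Definition fps := nat -> R.
Definition fps_zero : fps := fun _ => 0.
Definition fps_one : fps := fun n => if n == 0%N then 1 else 0.
Definition fps_add (f g : fps) : fps := fun n => f n + g n.
Definition fps_scale (c : R) (f : fps) : fps := fun n => c * f n.
Definition fps_mul (f g : fps) : fps :=
  fun n => \sum_(i < n.+1) f i * g (n - i)%N.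
Definition fps_exp (f : fps) (k : nat) : fps := iter k (fps_mul f) fps_one.
Definition fps_of_poly (p : {poly R}) : fps := fun n => p`_n.
Definition fps_eval (P : {poly {poly R}}) (y : fps) : fps :=
  \big[fps_add/fps_zero]_(j < size P) fps_mul (fps_of_poly P`_j) (fps_exp y j).
Definition fps_algebraic (y : fps) : Prop :=
  exists P : {poly {poly R}}, P != 0 /\ forall n, fps_eval P y n = 0.

Definition fps_arc (A : algType R) (f : A -> fps) : Prop :=
  [/\ forall n, f 1 n = fps_one n,
      forall a b n, f (a + b) n = fps_add (f a) (f b) n,
      forall a b n, f (a * b) n = fps_mul (f a) (f b) n,
      forall (c : R) a n, f (c *: a) n = fps_scale c (f a) n
    & forall a, fps_algebraic (f a)].

(* ---------- Puiseux series R[[t^*]] of nonnegative order ------------------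
   A pair (d, f) represents  sum_i f i * t^(i/(d+1)).  Two representatives
   denote the same Puiseux series iff they have the same coefficient at every
   rational exponent (pcoef). *)
Definition pser := (nat * fps)%type.
Definition pcoef (p : pser) (q : rat) : R :=
  let x := q * (p.1.+1)%:R in
  if x \is a Num.nat then p.2 (Num.truncn x) else 0.
Definition peq (p q : pser) : Prop := forall r : rat, pcoef p r = pcoef q r.
(* reindex a series in t^(1/m) as a series in t^(1/(k m)) *)
Definition spread (k : nat) (f : fps) : fps :=
  fun i => if (k %| i)%N then f (i %/ k)%N else 0.
Definition pzero : pser := (0%N, fps_zero).
Definition pone : pser := (0%N, fps_one).
Definition padd (p q : pser) : pser :=
  ((p.1.+1 * q.1.+1).-1, fps_add (spread q.1.+1 p.2) (spread p.1.+1 q.2)).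
Definition pmul (p q : pser) : pser :=
  ((p.1.+1 * q.1.+1).-1, fps_mul (spread q.1.+1 p.2) (spread p.1.+1 q.2)).
Definition pscale (c : R) (p : pser) : pser := (p.1, fps_scale c p.2).
Definition pexp (p : pser) (k : nat) : pser := iter k (pmul p) pone.
Definition pser_of_poly (p : {poly R}) : pser := (0%N, fps_of_poly p).
Definition pser_eval (P : {poly {poly R}}) (y : pser) : pser :=
  \big[padd/pzero]_(j < size P) pmul (pser_of_poly P`_j) (pexp y j).
Definition pser_algebraic (y : pser) : Prop :=
  exists P : {poly {poly R}}, P != 0 /\ peq (pser_eval P y) pzero.

Definition pser_arc (A : algType R) (f : A -> pser) : Prop :=
  [/\ peq (f 1) pone,
      forall a b, peq (f (a + b)) (padd (f a) (f b)),
      forall a b, peq (f (a * b)) (pmul (f a) (f b)),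
      forall (c : R) a, peq (f (c *: a)) (pscale c (f a))
    & forall a, pser_algebraic (f a)].

Definition subst_fps (A B : algType R) (phi : A -> B) : Prop :=
  forall f : A -> fps, fps_arc f ->
    (exists g : B -> fps, fps_arc g /\ forall a n, g (phi a) n = f a n) /\
    (forall g1 g2 : B -> fps, fps_arc g1 -> fps_arc g2 ->
       (forall a n, g1 (phi a) n = f a n) -> (forall a n, g2 (phi a) n = f a n) ->
       forall b n, g1 b n = g2 b n).

Definition subst_pser (A B : algType R) (phi : A -> B) : Prop :=
  forall f : A -> pser, pser_arc f ->
    (exists g : B -> pser, pser_arc g /\ forall a, peq (g (phi a)) (f a)) /\
    (forall g1 g2 : B -> pser, pser_arc g1 -> pser_arc g2 ->
       (forall a, peq (g1 (phi a)) (f a)) -> (forall a, peq (g2 (phi a)) (f a)) ->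
       forall b, peq (g1 b) (g2 b)).

Definition weak_subst (A B : algType R) (phi : A -> B) : Prop :=
  forall f : A -> R^o, ralg_hom f ->
    (exists g : B -> R^o, ralg_hom g /\ forall a, g (phi a) = f a) /\
    (forall g1 g2 : B -> R^o, ralg_hom g1 -> ralg_hom g2 ->
       (forall a, g1 (phi a) = f a) -> (forall a, g2 (phi a) = f a) ->
       forall b, g1 b = g2 b).

End Defs.

From mathcomp Require Import all_boot all_order all_algebra reals.
From mathcomp Require Import boolp.
Set Implicit Arguments.
Unset Strict Implicit.
Unset Printing Implicit Defensive.
Import GRing.Theory Num.Theory.
Local Open Scope ring_scope.

(* A point [f : A -> R] is the same thing as an arc with constant coefficients:
   composing with the constant embedding [R -> R[[t]]_alg] turns points into
   arcs, and taking the constant term (evaluation at [t = 0]) turns arcs back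
   into points. Existence and uniqueness of liftings of arcs therefore give
   existence and uniqueness of liftings of points. *)

Section PointsAsConstantArcs.
Variable R : realType.

Definition fps_const (c : R) : fps R := fun n => if n == 0%N then c else 0.

Lemma fps_const0 : fps_const 0 = fps_zero R.
Proof. by apply: funext => n; rewrite /fps_const; case: eqP. Qed.

Lemma fps_const1 : fps_const 1 = fps_one R.
Proof. by []. Qed.

Lemma fps_constD a b : fps_add (fps_const a) (fps_const b) = fps_const (a + b).
Proof. by apply: funext => n; rewrite /fps_add /fps_const; case: eqP; rewrite ?addr0. Qed.

Lemma fps_constM a b : fps_mul (fps_const a) (fps_const b) = fps_const (a * b).
Proof.
apply: funext => -[|n]; first by rewrite /fps_mul big_ord1.
rewrite /fps_mul /fps_const big1 // => -[[|i] _] _ /=; first by rewrite mulr0.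
by rewrite mul0r.
Qed.

Lemma fps_constZ c a : fps_scale c (fps_const a) = fps_const (c * a).
Proof. by apply: funext => n; rewrite /fps_scale /fps_const; case: eqP; rewrite ?mulr0. Qed.

Lemma fps_of_polyC a : fps_of_poly a%:P = fps_const a.
Proof. by apply: funext => n; rewrite /fps_of_poly coefC. Qed.

Lemma spread1 (f : fps R) : spread 1 f = f.
Proof. by apply: funext => n; rewrite /spread dvd1n divn1. Qed.

Definition pser_const (c : R) : pser R := (0%N, fps_const c).

Lemma pser_const0 : pser_const 0 = pzero R.
Proof. by rewrite /pser_const fps_const0. Qed.

Lemma pser_constD a b : padd (pser_const a) (pser_const b) = pser_const (a + b).
Proof. by rewrite /padd /= !spread1 fps_constD. Qed.

Lemma pser_constM a b : pmul (pser_const a) (pser_const b) = pser_const (a * b).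
Proof. by rewrite /pmul /= !spread1 fps_constM. Qed.

Lemma pser_of_polyC a : pser_of_poly a%:P = pser_const a.
Proof. by rewrite /pser_of_poly fps_of_polyC. Qed.

Lemma pcoef0 (p : pser R) : pcoef p 0 = p.2 0%N.
Proof. by rewrite /pcoef mul0r nat_num0 truncn0. Qed.

Lemma XsubCC_coefs (c : R) (P := 'X - c%:P%:P : {poly {poly R}}) :
  [/\ P != 0, size P = 2%N, P`_0 = (- c)%:P & P`_1 = 1].
Proof.
by rewrite -size_poly_eq0 size_XsubC !coefB !coefX !coefC /= sub0r subr0 polyCN.
Qed.

Lemma fps_const_algebraic c : fps_algebraic (fps_const c).
Proof.
have [P_neq0 P_size P_coef0 P_coef1] := XsubCC_coefs c.
exists ('X - c%:P%:P); split=> // n.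
rewrite /fps_eval P_size !big_ord_recl big_ord0 /= P_coef0 P_coef1 -polyC1.
rewrite !fps_of_polyC /fps_exp /= -fps_const1 -fps_const0 !fps_constM !fps_constD.
by rewrite !mulr1 mul1r addr0 addNr fps_const0.
Qed.

Lemma pser_const_algebraic c : pser_algebraic (pser_const c).
Proof.
have [P_neq0 P_size P_coef0 P_coef1] := XsubCC_coefs c.
exists ('X - c%:P%:P); split=> // r.
rewrite /pser_eval P_size !big_ord_recl big_ord0 /= P_coef0 P_coef1 -polyC1.
rewrite !pser_of_polyC /pexp /= -pser_const0 !pser_constM !pser_constD.
by rewrite !mulr1 mul1r addr0 addNr.
Qed.

Lemma fps_arc_const (C : algType R) (h : C -> R^o) :
  ralg_hom h -> fps_arc (fps_const \o h).
Proof.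
case=> h1 hD hM hZ; split=> [n|a b n|a b n|c a n|a] /=.
- by rewrite h1.
- by rewrite fps_constD hD.
- by rewrite fps_constM hM.
- by rewrite fps_constZ hZ.
- exact: fps_const_algebraic.
Qed.

Lemma pser_arc_const (C : algType R) (h : C -> R^o) :
  ralg_hom h -> pser_arc (pser_const \o h).
Proof.
case=> h1 hD hM hZ; split=> [|a b|a b|c a|a] /=.
- by rewrite h1.
- by rewrite pser_constD hD.
- by rewrite pser_constM hM.
- by rewrite /pscale /= fps_constZ hZ.
- exact: pser_const_algebraic.
Qed.

Lemma ralg_hom_fps_coef0 (C : algType R) (g : C -> fps R) :
  fps_arc g -> ralg_hom (fun b => g b 0%N : R^o).
Proof.
case=> g1 gD gM gZ _; split=> [|a b|a b|c a].
- by rewrite g1.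
- by rewrite gD.
- by rewrite gM /fps_mul big_ord1.
- by rewrite gZ.
Qed.

Lemma ralg_hom_pser_coef0 (C : algType R) (g : C -> pser R) :
  pser_arc g -> ralg_hom (fun b => pcoef (g b) 0 : R^o).
Proof.
case=> g1 gD gM gZ _; split=> [|a b|a b|c a].
- by rewrite g1 pcoef0.
- by rewrite gD !pcoef0 /= /fps_add /spread !dvdn0 !div0n.
- by rewrite gM !pcoef0 /= /fps_mul big_ord1 /spread !dvdn0 !div0n.
- by rewrite gZ !pcoef0.
Qed.

Section WeakSubstitution.
Variables (A B : algType R) (phi : A -> B).

Lemma weak_subst_of_subst_fps : subst_fps phi -> weak_subst phi.
Proof.
move=> subst f f_hom.
have [[g [g_arc g_lifts]] g_uniq] := subst _ (fps_arc_const f_hom).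
split.
  exists (fun b => g b 0%N); split; first exact: ralg_hom_fps_coef0.
  by move=> a; rewrite g_lifts.
move=> g1 g2 g1_hom g2_hom g1_lifts g2_lifts b.
have := g_uniq _ _ (fps_arc_const g1_hom) (fps_arc_const g2_hom) _ _ b 0%N.
by apply=> a n /=; rewrite ?g1_lifts ?g2_lifts.
Qed.

Lemma weak_subst_of_subst_pser : subst_pser phi -> weak_subst phi.
Proof.
move=> subst f f_hom.
have [[g [g_arc g_lifts]] g_uniq] := subst _ (pser_arc_const f_hom).
split.
  exists (fun b => pcoef (g b) 0); split; first exact: ralg_hom_pser_coef0.
  by move=> a; rewrite g_lifts pcoef0.
move=> g1 g2 g1_hom g2_hom g1_lifts g2_lifts b.
have := g_uniq _ _ (pser_arc_const g1_hom) (pser_arc_const g2_hom) _ _ b 0.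
by rewrite !pcoef0; apply=> a r /=; rewrite ?g1_lifts ?g2_lifts.
Qed.

End WeakSubstitution.

End PointsAsConstantArcs.

Theorem proposition3p3 (R : realType) (A B : comAlgType R) (phi : A -> B) :
  ralg_hom phi ->
  subst_fps phi \/ subst_pser phi ->
  weak_subst phi.
Proof.
by move=> _ [/weak_subst_of_subst_fps | /weak_subst_of_subst_pser].
Qed.
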